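(* Let $N\ge 2$ be an integer and consider the one-mode projection graph $G_N$ on the primes $\le N$ defined below. Let $p_k$ denote the $k$-th prime ($p_1=2,p_2=3,\dots$) and set $p_0=1$. For a nonnegative integer $k$, let $P(k)$ be the fraction of primes $p\le N$ whose degree in $G_N$ equals $k$. Then $$P(k)=\frac{\pi\left(\frac{N}{p_k}\right)-\pi\left(\frac{N}{p_{k+1}}\right)}{\pi(N)},$$ where $\pi(x)$ is the number of primes $\le x$.
   Context: The graph $G_N$ has vertex set the primes $p\le N$. Two distinct primes $p,p'\le N$ are adjacent iff some composite integer $c\le N$ is divisible by both $p$ and $p'$. A prime $p$ carries a self-loop iff $p^2\le N$. The degree of $p$ is the number of distinct primes $p'\ne p$ adjacent to $p$, plus $1$ if $p$ carries a self-loop. *)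

From mathcomp Require Import all_boot all_order all_algebra.
Set Implicit Arguments. Unset Strict Implicit. Unset Printing Implicit Defensive.

Definition prime_pi (n : nat) : nat := count prime (iota 0 n.+1).

Lemma next_prime_ex (m : nat) : exists p, (m < p) && prime p.
Proof. by case: (prime_above m) => p Hm Hp; exists p; rewrite Hm Hp. Qed.
Definition next_prime (m : nat) : nat := ex_minn (next_prime_ex m).

Definition nth_prime (k : nat) : nat := iter k next_prime 1.

Definition composite (c : nat) : bool := (1 < c) && ~~ prime c.

Definition adjG (N p q : nat) : bool :=
  (p != q) && [exists c : 'I_N.+1, composite c && (p %| c) && (q %| c)].

Definition loopG (N p : nat) : bool := p ^ 2 <= N.

Definition degG (N p : nat) : nat :=
  #|[set q : 'I_N.+1 | prime q && adjG N p q]| + loopG N p.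

Definition Pdeg (N k : nat) : rat :=
  (#|[set p : 'I_N.+1 | prime p && (degG N p == k)]|%:R / (prime_pi N)%:R)%R.

From mathcomp Require Import all_boot all_order all_algebra zify.
Set Implicit Arguments. Unset Strict Implicit. Unset Printing Implicit Defensive.

(* Two distinct primes p, q <= N are adjacent exactly when p * q <= N: the
   product p * q is a composite witness, and any composite divisible by both
   is a multiple of p * q.  The self-loop condition p * p <= N contributes q = p,
   so the degree of p is the number of primes q <= N / p, that is pi(N / p).
   Since pi(m) = k exactly when p_k <= m < p_(k+1), the prime p has degree k iff
   N / p_(k+1) < p <= N / p_k, and there are pi(N / p_k) - pi(N / p_(k+1)) such
   primes. *)

Lemma count_add (T : Type) (a b c : pred T) (s : seq T) :
  (forall x, a x = b x + c x :> nat) -> count a s = count b s + count c s.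
Proof. by move=> abc; elim: s => [|x s IHs] //=; rewrite IHs abc; lia. Qed.

Lemma count_predC1_mem (T : eqType) (a : pred T) (x : T) (s : seq T) :
  uniq s -> x \in s -> count a s = count (predI a (predC1 x)) s + a x.
Proof.
move=> s_uniq sx.
rewrite (@count_add _ _ (predI a (predC1 x)) (fun y => a y && (y == x))); last first.
  by move=> y /=; case: (a y); case: (y == x).
congr (_ + _); case ax: (a x).
  rewrite (@eq_count _ _ (pred1 x)) ?count_uniq_mem ?sx // => y /=.
  by case: eqP => [->|]; rewrite ?ax ?andbF.
rewrite (@eq_count _ _ pred0) ?count_pred0 // => y /=.
by case: eqP => [->|]; rewrite ?ax ?andbF.
Qed.

Lemma card_ord_count (n : nat) (P : pred nat) :
  #|[set i : 'I_n | P i]| = count P (iota 0 n).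
Proof.
rewrite -val_enum_ord count_map cardE /enum_mem size_filter -enumT.
by rewrite (@eq_filter _ _ predT) // filter_predT; apply: eq_count => i /=; rewrite inE.
Qed.

Lemma prime_piS (m : nat) : prime_pi m.+1 = prime_pi m + prime m.+1.
Proof. by rewrite /prime_pi -addn1 iotaD count_cat /= addn0. Qed.

Lemma leq_prime_pi (m n : nat) : m <= n -> prime_pi m <= prime_pi n.
Proof.
move=> /subnKC <-; elim: (n - m) => [|d IHd]; first by rewrite addn0.
by rewrite addnS prime_piS (leq_trans IHd) ?leq_addr.
Qed.

Lemma prime_pi_constant (a b : nat) :
  a <= b -> (forall q, a < q <= b -> ~~ prime q) -> prime_pi b = prime_pi a.
Proof.
move=> /subnKC <-; elim: (b - a) => [|d IHd] no_prime; first by rewrite addn0.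
rewrite addnS prime_piS (negbTE (no_prime _ _)) ?addn0; last by lia.
by apply: IHd => q /andP[aq qd]; apply: no_prime; lia.
Qed.

Lemma prime_pi_count (n m : nat) :
  m < n -> prime_pi m = count (fun q => prime q && (q <= m)) (iota 0 n).
Proof.
move=> mn; rewrite /prime_pi -(subnKC mn) iotaD count_cat.
have -> : count (fun q => prime q && (q <= m)) (iota (0 + m.+1) (n - m.+1)) = 0.
  apply/eqP; rewrite eqn0Ngt -has_count; apply/hasPn => q.
  by rewrite mem_iota add0n => /andP[mq _]; rewrite leqNgt mq andbF.
rewrite addn0; apply: eq_in_count => q; rewrite mem_iota add0n => /andP[_ qm].
by rewrite /= -ltnS qm andbT.
Qed.

Lemma prime_pi_interval (n a b : nat) : b <= a < n ->
  prime_pi a = prime_pi b + count (fun q => prime q && (b < q <= a)) (iota 0 n).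
Proof.
move=> /andP[ba an]; have bn := leq_ltn_trans ba an.
rewrite (prime_pi_count an) (prime_pi_count bn); apply: count_add => q /=.
case: (prime q) => //=; case: (leqP q b) => [qb|bq] /=; last by rewrite add0n.
by rewrite (leq_trans qb ba).
Qed.

Lemma nth_primeS (k : nat) : nth_prime k.+1 = next_prime (nth_prime k).
Proof. by rewrite /nth_prime iterS. Qed.

Lemma next_primeP (m : nat) :
  [/\ m < next_prime m, prime (next_prime m) &
      forall q, m < q -> prime q -> next_prime m <= q].
Proof.
rewrite /next_prime; case: ex_minnP => p /andP[mp p_pr] p_min; split=> //.
by move=> q mq q_pr; apply: p_min; rewrite mq q_pr.
Qed.

Lemma prime_nth_prime (k : nat) : prime (nth_prime k.+1).
Proof. by rewrite nth_primeS; case: (next_primeP (nth_prime k)). Qed.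

Lemma nth_prime_ltS (k : nat) : nth_prime k < nth_prime k.+1.
Proof. by rewrite nth_primeS; case: (next_primeP (nth_prime k)). Qed.

Lemma nth_prime_gt0 (k : nat) : 0 < nth_prime k.
Proof. by case: k => [|k] //; rewrite prime_gt0 ?prime_nth_prime. Qed.

Lemma nth_prime_gap (k q : nat) :
  nth_prime k < q < nth_prime k.+1 -> ~~ prime q.
Proof.
move=> /andP[kq qk]; apply/negP => q_pr.
by move: qk; rewrite nth_primeS; case: (next_primeP (nth_prime k)) => _ _ /(_ q kq q_pr); lia.
Qed.

Lemma prime_pi_nth_prime (k : nat) : prime_pi (nth_prime k) = k.
Proof.
elim: k => [//|k IHk]; have := nth_prime_ltS k; have := nth_prime_gt0 k.+1.
case: (nth_prime k.+1) (prime_nth_prime k) (@nth_prime_gap k) => [//|p] p_pr gap _.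
rewrite ltnS prime_piS p_pr addn1 => kp; congr _.+1.
rewrite (prime_pi_constant kp) // => q /andP[kq qp]; apply: gap; rewrite kq ltnS.
Qed.

Lemma prime_pi_between (k m : nat) :
  nth_prime k <= m < nth_prime k.+1 -> prime_pi m = k.
Proof.
move=> /andP[km mk]; rewrite (prime_pi_constant km) ?prime_pi_nth_prime //.
by move=> q /andP[kq qm]; apply: (nth_prime_gap (k := k)); rewrite kq (leq_ltn_trans qm mk).
Qed.

Lemma prime_pi_eq (k m : nat) :
  0 < m -> (prime_pi m == k) = (nth_prime k <= m < nth_prime k.+1).
Proof.
move=> m_gt0; apply/eqP/idP => [pi_m|/prime_pi_between //]; apply/andP; split.
  case: k pi_m => [//|i] pi_m; rewrite leqNgt; apply/negP => m_lt.
  have pred_i : prime_pi (nth_prime i.+1).-1 = i.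
    by apply: prime_pi_between; rewrite -ltnS !prednK ?nth_prime_gt0 ?nth_prime_ltS ?leqnn.
  have := leq_prime_pi (m := m) (n := (nth_prime i.+1).-1).
  by rewrite pi_m pred_i ltnn -ltnS prednK ?nth_prime_gt0 // => /(_ m_lt).
rewrite ltnNge; apply/negP => le_m.
by have := leq_prime_pi le_m; rewrite prime_pi_nth_prime pi_m ltnn.
Qed.

Lemma composite_mul_prime (p q : nat) : prime p -> prime q -> composite (p * q).
Proof.
move=> p_pr q_pr; have p_gt1 := prime_gt1 p_pr; have q_gt1 := prime_gt1 q_pr.
rewrite /composite; apply/andP; split; first by nia.
apply/negP => /(dvdn_prime2 p_pr); rewrite dvdn_mulr // => /eqP; nia.
Qed.

Lemma adjG_prime (N p q : nat) :
  prime p -> prime q -> adjG N p q = (p != q) && (p * q <= N).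
Proof.
move=> p_pr q_pr; rewrite /adjG; case: eqP => //= /eqP neq_pq.
apply/existsP/idP => [[c /andP[/andP[/andP[c_gt1 _] p_c] q_c]]|pqN].
  have pq_c : p * q %| c by rewrite Gauss_dvd ?p_c ?q_c // prime_coprime // dvdn_prime2.
  by rewrite -ltnS (leq_ltn_trans (dvdn_leq (ltnW c_gt1) pq_c)).
exists (Ordinal (pqN : p * q < N.+1)) => /=.
by rewrite composite_mul_prime // dvdn_mulr // dvdn_mull.
Qed.

Lemma degG_prime (N p : nat) :
  prime p -> p <= N -> degG N p = prime_pi (N %/ p).
Proof.
move=> p_pr pN; have p_gt0 := prime_gt0 p_pr.
have p_iota : p \in iota 0 N.+1 by rewrite mem_iota.
rewrite (@prime_pi_count N.+1) ?ltnS ?leq_div //.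
rewrite (count_predC1_mem _ (iota_uniq 0 N.+1) p_iota) /degG.
rewrite (card_ord_count N.+1 (fun q => prime q && adjG N p q)).
congr (_ + _); last by rewrite /loopG /= p_pr leq_divRL // mulnn.
apply: eq_count => q /=; case q_pr: (prime q) => //=.
by rewrite adjG_prime // leq_divRL // mulnC eq_sym andbC.
Qed.

Lemma degG_eq (N k p : nat) : prime p -> p <= N ->
  (degG N p == k) = (N %/ nth_prime k.+1 < p <= N %/ nth_prime k).
Proof.
move=> p_pr pN; have p_gt0 := prime_gt0 p_pr.
rewrite degG_prime // prime_pi_eq ?divn_gt0 // leq_divRL // ltnNge leq_divRL //.
rewrite leq_divRL ?nth_prime_gt0 // ltnNge leq_divRL ?nth_prime_gt0 //.
by rewrite mulnC [nth_prime k.+1 * p]mulnC andbC.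
Qed.

Theorem mainTheorem9 (N k : nat) (hN : 2 <= N) :
  Pdeg N k =
  (((prime_pi (N %/ nth_prime k))%:R - (prime_pi (N %/ nth_prime k.+1))%:R)
     / (prime_pi N)%:R)%R.
Proof.
rewrite /Pdeg; set a := N %/ nth_prime k; set b := N %/ nth_prime k.+1.
have ba : b <= a by rewrite leq_div2l ?nth_prime_gt0 // ltnW ?nth_prime_ltS.
have aN : a < N.+1 by rewrite ltnS leq_div.
have card_deg : #|[set p : 'I_N.+1 | prime p && (degG N p == k)]| =
                count (fun p => prime p && (b < p <= a)) (iota 0 N.+1).
  rewrite (card_ord_count N.+1 (fun p => prime p && (degG N p == k))).
  apply: eq_in_count => p; rewrite mem_iota ltnS => /andP[_ pN] /=.
  by case p_pr: (prime p); rewrite //= degG_eq.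
rewrite card_deg (@prime_pi_interval N.+1 a b) ?ba //.
by rewrite GRing.natrD GRing.addrAC GRing.subrr GRing.add0r.
Qed.
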